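(* Let $\ell\ge1$ and $d\ge2$. Assign to every ordered pair of distinct hosts $(\mathbf{h}^s,\mathbf{h}^d)$ of $\mathcal{B}(\ell,d)$ its descending dipath, and give it the wavelength (color) $w_1\cdots w_\ell\in\mathbb{Z}_d^\ell$ defined by $w_i=(h^d_i-h^s_i)\bmod d$. Then any two dipaths sharing an arc receive different wavelengths, and at most $d^\ell-1$ wavelengths are used. Consequently, $$d^\ell-d^{\ell-1}\le\omega(\mathcal{B}(\ell,d))\le d^\ell-1.$$
   Context: The BCube $\mathcal{B}(\ell,d)$ ($\ell,d$ positive integers) is the symmetric digraph defined as follows, with $\mathbb{Z}_d=\{0,1,\dots,d-1\}$. - Hosts: all vectors $\mathbf{h}=h_1\cdots h_\ell\in\mathbb{Z}_d^{\ell}$. - Switches: for each layer $k\in\{1,\dots,\ell\}$, one switch $\mathbf{s}^k$ for each vector $s^k_1\cdots s^k_{\ell-1}\in\mathbb{Z}_d^{\ell-1}$. - Links: host $\mathbf{h}$ and layer-$k$ switch $\mathbf{s}^k$ are joined if and only if $s^k_1\cdots s^k_{\ell-1}=h_1\cdots h_{k-1}h_{k+1}\cdots h_\ell$. Each such link gives an uplink arc (host $\to$ switch) and a downlink arc (switch $\to$ host) at layer $k$. Descending dipath: let $\mathbf{h}^s\neq\mathbf{h}^d$ be hosts, and let $i_1>\dots>i_m$ be the coordinates in which they differ. Define $\mathbf{h}^0=\mathbf{h}^s$, and let $\mathbf{h}^j$ be $\mathbf{h}^{j-1}$ with its $i_j$-th coordinate replaced by $h^d_{i_j}$. The descending dipath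 goes, for each $j=1,\dots,m$, from $\mathbf{h}^{j-1}$ through the unique layer-$i_j$ switch adjacent to both $\mathbf{h}^{j-1}$ and $\mathbf{h}^j$, to $\mathbf{h}^j$. A host-to-host routing $R$ assigns to every ordered pair of distinct hosts a directed path between them. $\omega(\mathcal{B}(\ell,d),R)$ is the minimum number of colors needed to color the paths of $R$ so that any two paths sharing an arc get different colors. The optical index is $\omega(\mathcal{B}(\ell,d))=\min_R\omega(\mathcal{B}(\ell,d),R)$, the minimum taken over all host-to-host routings $R$. *)

From Stdlib Require Import ClassicalEpsilon.
From mathcomp Require Import all_boot.
Set Implicit Arguments. Unset Strict Implicit. Unset Printing Implicit Defensive.

(* Coordinates 1..l are represented by 'I_l (0-based). *)

Definition host (l d : nat) := {ffun 'I_l -> 'I_d}.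

(* Switches: a layer k together with a vector in Z_d^(l-1). *)
Definition switch (l d : nat) := ('I_l * {ffun 'I_l.-1 -> 'I_d})%type.

Definition vertex (l d : nat) := (host l d + switch l d)%type.

(* Host h is linked to layer-k switch s iff s = h_1..h_{k-1}h_{k+1}..h_l,
   i.e. s_j = h_(lift k j) for all j. *)
Definition linked (l d : nat) (h : host l d) (s : switch l d) : bool :=
  [forall j : 'I_l.-1, s.2 j == h (lift s.1 j)].

Definition arc (l d : nat) (u v : vertex l d) : bool :=
  match u, v with
  | inl h, inr s => linked h s
  | inr s, inl h => linked h s
  | _, _ => false
  end.

(* A path is stored as the tail p (vertices after the source). *)
Definition is_dipath (l d : nat) (s t : host l d) (p : seq (vertex l d)) : Prop :=
  [/\ path (@arc l d) (inl s) p, last (inl s) p = inl t & uniq (inl s :: p)].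

Definition arcs_of (T : Type) (x : T) (p : seq T) : seq (T * T) := zip (x :: p) p.

Definition routing (l d : nat) := host l d -> host l d -> seq (vertex l d).

Definition is_routing (l d : nat) (R : routing l d) : Prop :=
  forall s t : host l d, s != t -> is_dipath s t (R s t).

Definition share_arc (l d : nat) (R : routing l d) (s1 t1 s2 t2 : host l d) : bool :=
  has (fun a => a \in arcs_of (inl s2) (R s2 t2)) (arcs_of (inl s1) (R s1 t1)).

Definition proper_coloring (l d : nat) (T : eqType) (R : routing l d)
    (c : host l d -> host l d -> T) : Prop :=
  forall s1 t1 s2 t2 : host l d, s1 != t1 -> s2 != t2 -> (s1, t1) != (s2, t2) ->
    share_arc R s1 t1 s2 t2 -> c s1 t1 != c s2 t2.

Definition host_pairs (l d : nat) : seq (host l d * host l d) :=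
  [seq p <- [seq (s, t) | s <- enum (host l d), t <- enum (host l d)] | p.1 != p.2].

Definition ncolors (l d : nat) (T : eqType) (c : host l d -> host l d -> T) : nat :=
  size (undup [seq c p.1 p.2 | p <- host_pairs l d]).

(* Minimum of a set of naturals (classical; 0 if the set is empty). *)
Definition minP (P : nat -> Prop) : nat :=
  epsilon (inhabits 0) (fun n => P n /\ forall m, P m -> n <= m).

Definition omegaR (l d : nat) (R : routing l d) : nat :=
  minP (fun k => exists c : host l d -> host l d -> nat,
                   proper_coloring R c /\ ncolors c = k).

Definition optical_index (l d : nat) : nat :=
  minP (fun k => exists R : routing l d, is_routing R /\ omegaR R = k).

Fixpoint desc_aux (l d : nat) (t h : host l d) (ix : seq 'I_l) : seq (vertex l d) :=
  match ix with
  | [::] => [::]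
  | i :: ix' =>
      if h i == t i then desc_aux t h ix'
      else
        let h' : host l d := [ffun j => if j == i then t i else h j] in
        inr (i, [ffun j : 'I_l.-1 => h (lift i j)]) :: inl h' :: desc_aux t h' ix'
  end.

Definition desc_routing (l d : nat) : routing l d :=
  fun s t => desc_aux t s (rev (enum 'I_l)).

Definition wavelength (l d : nat) (s t : host l d) : {ffun 'I_l -> nat} :=
  [ffun i => (t i + d - s i) %% d].

From Pilot Require Import Defs.
From Stdlib Require Import Classical ClassicalEpsilon.
From mathcomp Require Import all_boot.
Set Implicit Arguments. Unset Strict Implicit. Unset Printing Implicit Defensive.

(* The descending dipath from s to t corrects the coordinates
   from the last one down, so an arc through a layer-i switch joins it to the
   host that agrees with s on the coordinates not yet corrected and with t on
   the others, a host depending on i and on the direction of the arc only.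
   Hence a shared arc gives, in every coordinate j, either s_j = s'_j or
   t_j = t'_j, and equal wavelengths w_j = t_j - s_j mod d then give the other
   equality as well.  Wavelengths are nonzero vectors of Z_d^l.  Fix a layer k.  The k-th coordinate can be read off every
   vertex except the layer-k switches, and it does not change along any arc
   other than an uplink into such a switch; so every dipath between hosts
   differing in coordinate k uses one of the d^l layer-k uplinks.  Each uplink
   carries at most omega paths, which must be colored differently, while there
   are d^l (d^l - d^(l-1)) such pairs of hosts. *)

Lemma card_host l d : #|host l d| = d ^ l.
Proof. by rewrite card_ffun !card_ord. Qed.

Lemma index_drop_uniq (T : eqType) (r r' : seq T) n x :
  uniq r -> drop n r = x :: r' -> index x r = n.
Proof.
move=> r_uniq dropE; have n_lt : n < size r.
  by rewrite ltnNge; apply: contraPN dropE => /drop_oversize ->.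
move: r_uniq; rewrite -(cat_take_drop n r) dropE cat_uniq index_cat /=.
move=> /and3P[_ + _]; rewrite negb_or => /andP[/negPf -> _].
by rewrite eqxx addn0 size_take n_lt.
Qed.

Lemma path_arcs_of (T : eqType) (r : rel T) x p a :
  path r x p -> a \in arcs_of x p -> r a.1 a.2.
Proof.
elim: p x => [|y p IH] x //= /andP[r_xy r_p]; rewrite in_cons => /orP[/eqP-> //|].
exact: IH.
Qed.

Lemma size_undup_le_card (T : finType) (U : eqType) (f : T -> U) (A : {pred T})
    (r : seq U) :
  {subset r <= image f A} -> size (undup r) <= #|A|.
Proof.
move=> r_sub; rewrite -(size_image f); apply: uniq_leq_size (undup_uniq r) _.
by move=> x; rewrite mem_undup => /r_sub.
Qed.

Lemma modn_subDK d (a b : 'I_d) : (b + d - a) %% d + a = b %[mod d].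
Proof. by rewrite modnDml -addnBA 1?ltnW // -addnA subnK 1?ltnW // modnDr. Qed.

Lemma eq_wavelength_coord l d (s t s' t' : host l d) i :
  wavelength s t = wavelength s' t' -> (s i == s' i) = (t i == t' i).
Proof.
move=> /ffunP /(_ i); rewrite !ffunE => w_eq.
apply/eqP/eqP => [si_eq|ti_eq]; apply: val_inj => /=.
- rewrite -(modn_small (ltn_ord (t i))) -(modn_small (ltn_ord (t' i))).
  by rewrite -(modn_subDK (s i)) -(modn_subDK (s' i)) w_eq si_eq.
- have := modn_subDK (s i) (t i); rewrite w_eq ti_eq -(modn_subDK (s' i) (t' i)).
  by move/eqP; rewrite eqn_modDl !modn_small // => /eqP.
Qed.

Lemma wavelength_eq_diag l d (s t : host l d) : wavelength s t = wavelength t t -> s = t.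
Proof.
by move=> w_eq; apply/ffunP => i; apply/eqP; rewrite (eq_wavelength_coord i w_eq).
Qed.

Section DescendingDipath.
Variables l d : nat.
Implicit Types (s t h g : host l d) (ix : seq 'I_l).

Lemma desc_aux_host_notin t h ix g j :
  j \notin ix -> inl g \in desc_aux t h ix -> g j = h j.
Proof.
elim: ix h => [|i ix IH] h //=; rewrite in_cons negb_or => /andP[/negPf ji jix].
case: ifP => _ /=; first exact: IH.
rewrite !in_cons /= => /orP[/eqP[->]|g_in]; first by rewrite ffunE ji.
by rewrite (IH _ jix g_in) ffunE ji.
Qed.

Lemma desc_aux_switch_layer t h ix sw : inr sw \in desc_aux t h ix -> sw.1 \in ix.
Proof.
elim: ix h => [|i ix IH] h //=; rewrite in_cons.
case: ifP => _; first by move/IH ->; rewrite orbT.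
by rewrite !in_cons /= => /orP[/eqP[->]|/IH ->]; rewrite ?eqxx ?orbT.
Qed.

Lemma desc_aux_uniq t h ix : uniq ix -> uniq (inl h :: desc_aux t h ix).
Proof.
elim: ix h => [|i ix IH] h //= /andP[iNix ix_uniq].
case: ifP => hi; first exact: IH.
set h' := [ffun j => if j == i then t i else h j].
have h'i : h' i = t i by rewrite ffunE eqxx.
have /= /andP[h'N ->] := IH h' ix_uniq.
rewrite !in_cons h'N !andbT /= negb_or -andbA; apply/and3P; split.
- by apply: contraFN hi => /eqP[->]; rewrite h'i.
- by apply: contraFN hi => /(desc_aux_host_notin iNix) ->; rewrite h'i.
- by apply: contraNN iNix => /desc_aux_switch_layer.
Qed.

Lemma desc_aux_path t h ix : path (@Defs.arc l d) (inl h) (desc_aux t h ix).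
Proof.
elim: ix h => [|i ix IH] h //=; case: ifP => _ //=.
rewrite IH andbT; apply/andP; split; apply/forallP => j /=; rewrite !ffunE //.
by rewrite [lift i j == i]eq_sym (negPf (neq_lift i j)).
Qed.

Lemma desc_aux_last t h ix :
  (forall j, j \notin ix -> h j = t j) -> last (inl h) (desc_aux t h ix) = inl t.
Proof.
elim: ix h => [|i ix IH] h /= ht; first by congr inl; apply/ffunP => j; exact: ht.
have ht' j : j \notin ix -> j != i -> h j = t j.
  by move=> jix ji; apply: ht; rewrite in_cons negb_or ji.
case: ifP => [/eqP hi|_] /=; apply: IH => j jix.
  by case: (eqVneq j i) => [->|]; [exact: hi|exact: ht'].
by rewrite ffunE; case: (eqVneq j i) => [->|]; [|exact: ht'].
Qed.

Lemma desc_routing_is_routing : is_routing (@desc_routing l d).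
Proof.
move=> s t _; split.
- exact: desc_aux_path.
- by apply: desc_aux_last => j; rewrite mem_rev mem_enum.
- by apply: desc_aux_uniq; rewrite rev_uniq enum_uniq.
Qed.

(* The host reached from s towards t once the first n coordinates of ix are
   corrected. *)
Definition stage s t ix n : host l d :=
  [ffun j => if j \in drop n ix then s j else t j].

Lemma stage_succ s t ix n i r : uniq ix -> drop n ix = i :: r ->
  stage s t ix n.+1 = [ffun j => if j == i then t i else stage s t ix n j].
Proof.
move=> ix_uniq dropE; have dropSE : drop n.+1 ix = r.
  by rewrite -add1n -drop_drop dropE drop1.
have iNr : i \notin r.
  by move: ix_uniq; rewrite -(cat_take_drop n ix) dropE cat_uniq /= => /and3P[_ _ /andP[]].
apply/ffunP => j; rewrite !ffunE dropSE dropE in_cons.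
by case: (eqVneq j i) => [->|] //=; rewrite (negPf iNr).
Qed.

Definition desc_arc s t ix (a : vertex l d * vertex l d) : Prop :=
  exists i : 'I_l,
    (a.1 = inl (stage s t ix (index i ix)) /\ exists z, a.2 = inr (i, z)) \/
    ((exists z, a.1 = inr (i, z)) /\ a.2 = inl (stage s t ix (index i ix).+1)).

Lemma desc_aux_arcs s t ix n : uniq ix ->
  {in arcs_of (inl (stage s t ix n)) (desc_aux t (stage s t ix n) (drop n ix)),
   forall a, desc_arc s t ix a}.
Proof.
move=> ix_uniq; move En: (drop n ix) => r; elim: r n En => [|i r IH] n dropE a //=.
have indexE := index_drop_uniq ix_uniq dropE.
have dropSE : drop n.+1 ix = r by rewrite -add1n -drop_drop dropE drop1.
have stageSE := stage_succ s t ix_uniq dropE.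
case: ifP => [/eqP stage_i|_].
  have -> : stage s t ix n = stage s t ix n.+1.
    by rewrite stageSE; apply/ffunP => j; rewrite [RHS]ffunE; case: eqVneq => [->|].
  exact: IH.
rewrite -stageSE /arcs_of /= !in_cons => /or3P[/eqP->|/eqP->|a_in].
- by exists i; left; rewrite indexE; split; last by eexists.
- by exists i; right; rewrite indexE; split; first by eexists.
- exact: IH a_in.
Qed.

Lemma desc_routing_arc s t a :
  a \in arcs_of (inl s) (desc_routing s t) -> desc_arc s t (rev (enum 'I_l)) a.
Proof.
have ix_uniq : uniq (rev (enum 'I_l)) by rewrite rev_uniq enum_uniq.
have stage0 : stage s t (rev (enum 'I_l)) 0 = s.
  by apply/ffunP => j; rewrite ffunE drop0 mem_rev mem_enum.
by have := @desc_aux_arcs s t _ 0 ix_uniq; rewrite stage0 drop0; apply.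
Qed.

Lemma stage_wavelength_inj s t s' t' ix n :
  stage s t ix n = stage s' t' ix n -> wavelength s t = wavelength s' t' ->
  s = s' /\ t = t'.
Proof.
move=> /ffunP stage_eq w_eq.
have coord_eq j : s j = s' j /\ t j = t' j.
  have := eq_wavelength_coord j w_eq; have := stage_eq j; rewrite !ffunE.
  by case: ifP => _ E; rewrite E eqxx; [move=> /esym/eqP -> | move=> /eqP ->].
by split; apply/ffunP => j; have [] := coord_eq j.
Qed.

Lemma desc_arc_inj s t s' t' ix a :
  desc_arc s t ix a -> desc_arc s' t' ix a -> wavelength s t = wavelength s' t' ->
  s = s' /\ t = t'.
Proof.
case: a => a1 a2 [i [[/= -> [z ->]]|[[z /= ->] ->]]].
  case=> i' [[[stage_eq] [z' [i_eq _]]]|[[z' //]]].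
  by rewrite -i_eq in stage_eq; apply: stage_wavelength_inj stage_eq.
case=> i' [[//]|[[z' [i_eq _]] [stage_eq]]].
by rewrite -i_eq in stage_eq; apply: stage_wavelength_inj stage_eq.
Qed.

Lemma desc_routing_wavelength_proper :
  proper_coloring (@desc_routing l d) (@wavelength l d).
Proof.
move=> s t s' t' _ _ pair_neq /hasP[a a_in a_in'].
apply: contraNN pair_neq => /eqP w_eq.
have [-> ->] := desc_arc_inj (desc_routing_arc a_in) (desc_routing_arc a_in') w_eq.
exact: eqxx.
Qed.

End DescendingDipath.

Lemma ncolors_wavelength l d : 0 < d -> ncolors (@wavelength l d) <= d ^ l - 1.
Proof.
move=> d_gt0; pose zero : host l d := [ffun => Ordinal d_gt0].
pose nat_vec (w : host l d) : {ffun 'I_l -> nat} := [ffun i => val (w i)].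
rewrite -card_host subn1 -(cardC1 zero).
apply: (@size_undup_le_card _ _ nat_vec) => _ /mapP[[s t] + ->] /=.
rewrite mem_filter /= => /andP[st_neq _].
have wE : wavelength s t = nat_vec [ffun i => Ordinal (ltn_pmod (t i + d - s i) d_gt0)].
  by apply/ffunP => i; rewrite !ffunE.
rewrite wE; apply: image_f; rewrite !inE; apply: contraNN st_neq => /eqP w0.
apply/eqP; apply: wavelength_eq_diag; rewrite wE w0.
by apply/ffunP => i; rewrite !ffunE addnC addnK modnn.
Qed.

Definition arc_users l d (R : routing l d) (a : vertex l d * vertex l d) :
    {set host l d * host l d} :=
  [set p | (p.1 != p.2) && (a \in arcs_of (inl p.1) (R p.1 p.2))].

Lemma card_arc_users_le_ncolors l d (T : eqType) (R : routing l d)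
    (c : host l d -> host l d -> T) a :
  proper_coloring R c -> #|arc_users R a| <= ncolors c.
Proof.
move=> c_proper; rewrite cardE -(size_map (fun p => c p.1 p.2)).
rewrite -(undup_id (_ : uniq [seq c p.1 p.2 | p <- enum (arc_users R a)])).
  apply: uniq_leq_size (undup_uniq _) _ => x; rewrite !mem_undup.
  move=> /mapP[p]; rewrite mem_enum inE => /andP[p_neq _] ->; apply: map_f.
  by rewrite mem_filter p_neq; case: p p_neq => s t _; rewrite (allpairs_f pair) ?mem_enum.
rewrite map_inj_in_uniq ?enum_uniq // => [[s t] [s' t']]; rewrite !mem_enum !inE /=.
move=> /andP[st_neq a_in] /andP[st_neq' a_in'] c_eq.
case: (eqVneq (s, t) (s', t')) => // pair_neq.
have shared : share_arc R s t s' t' by apply/hasP; exists a.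
by have := c_proper _ _ _ _ st_neq st_neq' pair_neq shared; rewrite c_eq eqxx.
Qed.

Section LayerCut.
Variables (l d : nat) (k : 'I_l).
Implicit Types (s t h : host l d) (x y : vertex l d).

(* A layer-k switch does not see coordinate k of its hosts: [None]. *)
Definition coord_at x : option 'I_d :=
  match x with inl h => Some (h k) | inr sw => omap sw.2 (unlift sw.1 k) end.

Definition uplink_at (a : vertex l d * vertex l d) : bool :=
  if a is (inl _, inr sw) then sw.1 == k else false.

Definition uplink h : vertex l d * vertex l d :=
  (inl h, inr (k, [ffun j => h (lift k j)])).

Lemma arc_coord_at x y :
  Defs.arc x y -> ~~ uplink_at (x, y) -> coord_at x != None -> coord_at y = coord_at x.
Proof.
case: x y => [h|[i z]] [h'|[i' z']] //= /forallP /= linked_xy.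
  by case: unliftP => [j ->|->]; rewrite /= ?eqxx // (eqP (linked_xy j)).
by move=> _; case: unliftP => [j ->|] //= _; rewrite (eqP (linked_xy j)).
Qed.

Lemma path_coord_at x p :
  path (@Defs.arc l d) x p -> ~~ has uplink_at (arcs_of x p) -> coord_at x != None ->
  coord_at (last x p) = coord_at x.
Proof.
elim: p x => [|y p IH] x //= /andP[xy y_p]; rewrite negb_or => /andP[not_up no_up] x_def.
by rewrite IH ?(arc_coord_at xy not_up x_def).
Qed.

Lemma dipath_uplink s t p :
  is_dipath s t p -> s k != t k -> exists h, uplink h \in arcs_of (inl s) p.
Proof.
case=> st_path st_last _ st_neq.
have /hasP[[[h|//] [//|[i z]]] a_in /= /eqP i_k] : has uplink_at (arcs_of (inl s) p).
  apply: contraNT st_neq => no_up.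
  by have := path_coord_at st_path no_up isT; rewrite st_last => -[->].
exists h; have /forallP /= linked_hz := path_arcs_of st_path a_in.
suff z_eq : [ffun j => h (lift k j)] = z by rewrite /uplink z_eq -i_k.
by apply/ffunP => j; rewrite ffunE -i_k; apply/esym/eqP/linked_hz.
Qed.

Lemma card_coord_eq_le v : #|[set t : host l d | t k == v]| <= d ^ (l - 1).
Proof.
have -> : d ^ (l - 1) = #|{ffun 'I_l.-1 -> 'I_d}| by rewrite card_ffun !card_ord subn1.
apply: (@leq_card_in _ _ (fun t : host l d => [ffun j => t (lift k j)])).
move=> t t'; rewrite !inE => /eqP t_k /eqP t'_k /ffunP proj_eq.
apply/ffunP => i; case: (unliftP k i) => [j ->|->]; last by rewrite t_k t'_k.
by have := proj_eq j; rewrite !ffunE.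
Qed.

Lemma card_coord_neq_pairs :
  #|host l d| * (d ^ l - d ^ (l - 1)) <= #|[set p : host l d * host l d | p.1 k != p.2 k]|.
Proof.
rewrite -sum1_card (eq_bigl (fun p : host l d * host l d => true && (p.1 k != p.2 k)));
  last by move=> p; rewrite inE.
rewrite -(pair_big_dep xpredT (fun s t : host l d => s k != t k) (fun _ _ => 1)) /=.
rewrite -sum_nat_const; apply: leq_sum => s _; set S := [set t : host l d | t k == s k].
rewrite (eq_bigl (mem (~: S))) => [|t]; last by rewrite !inE eq_sym.
rewrite sum1_card -card_host -(cardsC S) leq_subLR leq_add2r.
exact: card_coord_eq_le.
Qed.

Lemma ncolors_ge (T : eqType) (R : routing l d) (c : host l d -> host l d -> T) :
  0 < d -> is_routing R -> proper_coloring R c -> d ^ l - d ^ (l - 1) <= ncolors c.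
Proof.
move=> d_gt0 R_routing c_proper.
set A := [set p : host l d * host l d | p.1 k != p.2 k].
pose f p := odflt p.1 [pick h | uplink h \in arcs_of (inl p.1) (R p.1 p.2)].
have f_users p : p \in A -> p \in arc_users R (uplink (f p)).
  case: p => s t; rewrite inE /= => st_k.
  have st_neq : s != t by apply: contraNneq st_k => ->.
  have [h h_up] := dipath_uplink (R_routing s t st_neq) st_k.
  by rewrite inE /= st_neq /f; case: pickP => [h' //|/(_ h)]; rewrite h_up.
have A_le : #|A| <= #|host l d| * ncolors c.
  rewrite -sum1_card (partition_big f predT) //= -sum_nat_const; apply: leq_sum => h _.
  apply: leq_trans (card_arc_users_le_ncolors (uplink h) c_proper).
  rewrite (eq_bigl (mem [set p in A | f p == h])) ?sum1_card => [|p]; last by rewrite !inE.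
  by apply/subset_leq_card/subsetP => p; rewrite inE => /andP[/f_users + /eqP <-].
have host_gt0 : 0 < #|host l d| by rewrite card_host expn_gt0 d_gt0.
by rewrite -(leq_pmul2l host_gt0) (leq_trans card_coord_neq_pairs A_le).
Qed.

End LayerCut.

Lemma minP_spec (P : nat -> Prop) n :
  P n -> P (minP P) /\ forall m, P m -> minP P <= m.
Proof.
move=> Pn; apply: (epsilon_spec (inhabits 0) (fun m => P m /\ forall k, P k -> m <= k)).
elim/ltn_ind: n Pn => n IH Pn.
case: (classic (exists2 m, P m & m < n)) => [[m Pm m_lt]|no_smaller].
  exact: IH m_lt Pm.
exists n; split=> // m Pm; rewrite leqNgt; apply/negP => m_lt.
by apply: no_smaller; exists m.
Qed.

Section OpticalIndex.
Variables l d : nat.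
Implicit Type R : routing l d.

Let proper_size R k :=
  exists c : host l d -> host l d -> nat, proper_coloring R c /\ ncolors c = k.
Let routing_size k := exists R, is_routing R /\ omegaR R = k.

Lemma proper_coloring_inj (T U : eqType) R (c : host l d -> host l d -> T) (f : T -> U) :
  injective f -> proper_coloring R c -> proper_coloring R (fun s t => f (c s t)).
Proof.
by move=> f_inj c_proper s t s' t' *; rewrite (inj_eq f_inj); apply: c_proper.
Qed.

Lemma omegaR_le (T : countType) R (c : host l d -> host l d -> T) :
  proper_coloring R c -> omegaR R <= ncolors c.
Proof.
move=> c_proper; pose c' s t := pickle (c s t).
have c'_proper : proper_coloring R c' := proper_coloring_inj (pcan_inj pickleK) c_proper.
have c'_ncolors : ncolors c' = ncolors c.
  by rewrite /ncolors (map_comp pickle) undup_map_inj ?size_map //; apply: pcan_inj pickleK.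
have c'_size : proper_size R (ncolors c') by exists c'.
by rewrite -c'_ncolors; have [_] := minP_spec c'_size; apply.
Qed.

Lemma omegaR_ge R b :
  (forall c : host l d -> host l d -> nat, proper_coloring R c -> b <= ncolors c) ->
  b <= omegaR R.
Proof.
move=> b_le; pose c (s t : host l d) := pickle (s, t).
have c_proper : proper_coloring R c.
  by move=> s t s' t' _ _ pair_neq _; rewrite (inj_eq (pcan_inj pickleK)).
have c_size : proper_size R (ncolors c) by exists c.
have [[c' [c'_proper c'_size]] _] := minP_spec c_size.
by rewrite /omegaR -c'_size; apply: b_le.
Qed.

Lemma optical_index_le R : is_routing R -> optical_index l d <= omegaR R.
Proof.
move=> R_routing; have R_size : routing_size (omegaR R) by exists R.
by have [_] := minP_spec R_size; apply.
Qed.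

Lemma optical_index_ge b :
  (forall R, is_routing R -> b <= omegaR R) -> b <= optical_index l d.
Proof.
move=> b_le; have desc_size : routing_size (omegaR (@desc_routing l d)).
  by exists (@desc_routing l d); split=> //; apply: desc_routing_is_routing.
have [[R [R_routing R_size]] _] := minP_spec desc_size.
by rewrite /optical_index -R_size; apply: b_le.
Qed.

End OpticalIndex.

Theorem mainTheorem5 (l d : nat) (hl : 1 <= l) (hd : 2 <= d) :
  [/\ is_routing (@desc_routing l d),
      proper_coloring (@desc_routing l d) (@wavelength l d),
      ncolors (@wavelength l d) <= d ^ l - 1
    & d ^ l - d ^ (l - 1) <= optical_index l d <= d ^ l - 1].
Proof.
have d_gt0 : 0 < d := ltnW hd.
have desc_is_routing := @desc_routing_is_routing l d.
have desc_proper := @desc_routing_wavelength_proper l d.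
have desc_ncolors := @ncolors_wavelength l d d_gt0.
split=> //; apply/andP; split.
  apply: optical_index_ge => R R_routing; apply: omegaR_ge => c c_proper.
  exact: (ncolors_ge (Ordinal hl)) d_gt0 R_routing c_proper.
apply: leq_trans (optical_index_le desc_is_routing) _.
exact: leq_trans (omegaR_le desc_proper) desc_ncolors.
Qed.
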